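(* Let $f$ be a parabolic Dulac germ with $f(x)=x-ax^\alpha\boldsymbol\ell^m+o(x^\alpha\boldsymbol\ell^m)$ as $x\to0^+$, where $a>0$, $\alpha>1$, $m\in\mathbb Z$, $m\le0$. Let $g=\mathrm{id}-f$ and let $x_0>0$ be close to $0$. Let $A_f(x_0,\varepsilon)$ and $A_f^c(x_0,\varepsilon)$ be the discrete and continuous time lengths of the $\varepsilon$-neighborhood of the orbit of $x_0$ (defined below). Then $$A_f^c(x_0,\varepsilon)-A_f(x_0,\varepsilon)=\varepsilon^{2-\frac1\alpha}\boldsymbol\ell(\varepsilon)^{\frac m\alpha}\,k(\varepsilon),$$ where $k(\varepsilon)=O(1)$ as $\varepsilon\to0^+$ and $k$ is high-amplitude oscillatory at $0$; in particular $k$ has no power-logarithm asymptotic behavior, and $A_f^c(x_0,\varepsilon)-A_f(x_0,\varepsilon)=O(\varepsilon^{1+\delta})$ for some $\delta>0$.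
   Context: $\boldsymbol\ell(x)=-1/\log x$, $\boldsymbol\ell_2=\boldsymbol\ell\circ\boldsymbol\ell$. A Dulac series is $\widehat f=\sum_{i\ge1}P_i(\boldsymbol\ell^{-1})x^{\alpha_i}$ with $P_i$ real polynomials and $(\alpha_i)$ a positive, strictly increasing, finite or finitely generated sequence tending to $+\infty$. A Dulac germ is a germ $f$ analytic on some $(0,d)$ such that $f-\sum_{i\le n}P_i(\boldsymbol\ell^{-1})x^{\alpha_i}=o(x^{\alpha_n})$ for every $n$ (for a Dulac series, its Dulac expansion) and which extends to a bounded analytic function on a standard quadratic domain in the sense of Ilyashenko; it is parabolic if $P_1\equiv1$, $\alpha_1=1$ and $f\ne\mathrm{id}$. Discrete length: with $x_n=f^{\circ n}(x_0)$ and $n_\varepsilon$ the integer with $x_{n_\varepsilon}-x_{n_\varepsilon+1}\le2\varepsilon<x_{n_\varepsilon-1}-x_{n_\varepsilon}$, $A_f(x_0,\varepsilon)=x_{n_\varepsilon}+2\varepsilon+2\varepsilon n_\varepsilon$. Continuous length: $f$ is (by known results) the time-one map of the flow $\{f^t\}$ of an analytic vector field $\xi(x)\frac{d}{dx}$ on $(0,d)$ satisfying $\xi(x)\sim-ax^\alpha\boldsymbol\ell^m$, $\xi'(x)\sim-a\alpha x^{\alpha-1}\boldsymbol\ell^m$ and $\xi=-g-\tfrac12\xi\xi'+o(x^{2\alpha-1}\boldsymbol\ell^{2m})$ as $x\to0^+$, with Fatou coordinate $\Psi$, $\Psi'=1/\xi$, $\Psi(f^t(x))=\Psi(x)+t$.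 The continuous critical time $\tau_\varepsilon$ is defined by $f^{\tau_\varepsilon}(x_0)-f^{\tau_\varepsilon+1}(x_0)=2\varepsilon$, and $A^c_f(x_0,\varepsilon)=f^{\tau_\varepsilon}(x_0)+2\varepsilon+2\varepsilon\tau_\varepsilon$. A function $h$ is high-amplitude oscillatory at $0$ if there are sequences $\varepsilon_n^1\to0$, $\varepsilon_n^2\to0$ and reals $A<B$ with $h(\varepsilon_n^1)<A<B<h(\varepsilon_n^2)$ for all $n$. *)

From Stdlib Require Import Reals Lra List ZArith.
Open Scope R_scope.

(* l(x) = -1/log x ;  note l^{-1}(x) = -log x *)
Definition ell (x : R) : R := - / ln x.

Definition little_o (u v : R -> R) : Prop :=
  forall eps, 0 < eps -> exists delta, 0 < delta /\
    forall x, 0 < x < delta -> Rabs (u x) <= eps * Rabs (v x).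

Definition asymp_equiv (u v : R -> R) : Prop :=
  little_o (fun x => u x - v x) v.

Definition real_analytic_on (a b : R) (u : R -> R) : Prop :=
  forall x0, a < x0 < b -> exists r, 0 < r /\ exists c : nat -> R,
    forall x, Rabs (x - x0) < r ->
      infinite_sum (fun n => c n * (x - x0) ^ n) (u x).

Definition Cx := (R * R)%type.
Definition Cadd (z w : Cx) : Cx := (fst z + fst w, snd z + snd w).
Definition Csub (z w : Cx) : Cx := (fst z - fst w, snd z - snd w).
Definition Cmul (z w : Cx) : Cx :=
  (fst z * fst w - snd z * snd w, fst z * snd w + snd z * fst w).
Definition Cnorm (z : Cx) : R := sqrt (fst z ^ 2 + snd z ^ 2).
Definition Csqrt (z : Cx) : Cx :=
  let r := Cnorm z in
  (sqrt ((r + fst z) / 2),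
   (if Rle_dec 0 (snd z) then 1 else -1) * sqrt ((r - fst z) / 2)).

(* Ilyashenko: phi_C(zeta) = zeta + C (zeta+1)^{1/2}; the standard quadratic
   domain, in the logarithmic chart zeta = -log z, is phi_C(C^+). *)
Definition phiC (C : R) (z : Cx) : Cx :=
  Cadd z (Cmul (C, 0) (Csqrt (Cadd z (1, 0)))).
Definition in_std_quad_domain (C : R) (w : Cx) : Prop :=
  exists z : Cx, 0 < fst z /\ w = phiC C z.

Definition holomorphic_on (U : Cx -> Prop) (F : Cx -> Cx) : Prop :=
  forall z, U z -> exists L : Cx, forall eps, 0 < eps -> exists delta, 0 < delta /\
    forall h, 0 < Cnorm h < delta -> U (Cadd z h) ->
      Cnorm (Csub (Csub (F (Cadd z h)) (F z)) (Cmul L h)) <= eps * Cnorm h.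

(* real polynomial given by its coefficient list (constant term first) *)
Definition peval (p : list R) (y : R) : R :=
  fold_right (fun c acc => c + y * acc) 0 p.

Inductive in_semigroup (gens : list R) : R -> Prop :=
| sg_gen b : In b gens -> in_semigroup gens b
| sg_add u v : in_semigroup gens u -> in_semigroup gens v -> in_semigroup gens (u + v).

Definition dulac_partial (P : nat -> list R) (alpha : nat -> R) (n : nat) (x : R) : R :=
  sum_f_R0 (fun i => peval (P i) (- ln x) * Rpower x (alpha i)) n.

(* (P,alpha) is a Dulac expansion of f.  Finite series are represented by
   P_i = 0 for i large (exponents padded inside the semigroup). *)
Definition dulac_expansion (f : R -> R) (P : nat -> list R) (alpha : nat -> R) : Prop :=
  0 < alpha 0%nat /\
  (forall i, alpha i < alpha (S i)) /\
  (forall M, exists N, forall i, (N <= i)%nat -> M < alpha i) /\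
  (exists gens : list R, Forall (fun b => 0 < b) gens /\
      forall i, in_semigroup gens (alpha i)) /\
  (forall n, little_o (fun x => f x - dulac_partial P alpha n x)
                      (fun x => Rpower x (alpha n))).

Definition dulac_germ_with (f : R -> R) (P : nat -> list R) (alpha : nat -> R) : Prop :=
  (exists d, 0 < d /\ real_analytic_on 0 d f) /\
  dulac_expansion f P alpha /\
  (exists C, 0 < C /\ exists F : Cx -> Cx,
     holomorphic_on (in_std_quad_domain C) F /\
     (exists M, forall w, in_std_quad_domain C w -> Cnorm (F w) <= M) /\
     (exists s0, forall s, s0 < s -> F (s, 0) = (f (exp (- s)), 0))).

Definition parabolic_dulac (f : R -> R) : Prop :=
  (exists P alpha, dulac_germ_with f P alpha /\
     alpha 0%nat = 1 /\ forall y, peval (P 0%nat) y = 1) /\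
  ~ (exists delta, 0 < delta /\ forall x, 0 < x < delta -> f x = x).

Fixpoint iterate (f : R -> R) (n : nat) (x : R) : R :=
  match n with O => x | S k => f (iterate f k x) end.

Definition disc_crit (f : R -> R) (x0 eps : R) (n : nat) : Prop :=
  (1 <= n)%nat /\
  iterate f n x0 - iterate f (S n) x0 <= 2 * eps /\
  2 * eps < iterate f (n - 1) x0 - iterate f n x0.

Definition disc_length (f : R -> R) (x0 eps : R) (n : nat) : R :=
  iterate f n x0 + 2 * eps + 2 * eps * INR n.

(* y = f^t(x), the flow being given through the Fatou coordinate Psi on (0,d):
   Psi(f^t(x)) = Psi(x) + t *)
Definition flow_pt (d : R) (Psi : R -> R) (x t y : R) : Prop :=
  0 < y < d /\ Psi y = Psi x + t.

Definition cont_crit (d : R) (Psi : R -> R) (x0 eps tau y : R) : Prop :=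
  0 <= tau /\ flow_pt d Psi x0 tau y /\
  exists y1, flow_pt d Psi x0 (tau + 1) y1 /\ y - y1 = 2 * eps.

Definition cont_length (eps tau y : R) : R := y + 2 * eps + 2 * eps * tau.

Definition high_amplitude_oscillatory (k : R -> R) : Prop :=
  exists (e1 e2 : nat -> R) (A B : R),
    (forall n, 0 < e1 n) /\ (forall n, 0 < e2 n) /\
    Un_cv e1 0 /\ Un_cv e2 0 /\ A < B /\
    forall n, k (e1 n) < A /\ B < k (e2 n).

From Stdlib Require Import Reals Lra Lia ZArith ClassicalEpsilon.
From Coquelicot Require Import Coquelicot.
Open Scope R_scope.

(* f is the time-one map of the flow of xi, with Fatou coordinate Psi (Psi' = 1/xi,
   Psi o f = Psi + 1).  For small eps the continuous critical point y solves y - f y = 2 eps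
   and lies in [x_n, x_(n-1)), where n is the discrete critical index, so that
     A^c - A = y - x_n + 2 eps (Psi y - Psi x_n).
   The three-point Taylor formula for Psi at f y < x_n <= y rewrites this as
   eps (x_n - f y) (y - x_n) Psi''(c).  Since Psi'' = -xi'/xi^2 is comparable to
   1 / (x^(alpha+1) l^m) and eps to y^alpha l^m, this is O(eps^(2-1/alpha) l(eps)^(m/alpha)).
   The normalised difference k vanishes at eps = (x_n - x_(n+1)) / 2, where y = x_n, and is
   bounded below when x_n is the midpoint of [f y, y]: hence the oscillation. *)

(** * Real-analysis toolkit *)

Lemma exp_le x y : x <= y -> exp x <= exp y.
Proof. intros [Hlt | ->]; [left; apply exp_increasing | right]; auto. Qed.

Lemma ln_le_inv x y : 0 < x -> 0 < y -> ln x <= ln y -> x <= y.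
Proof. intros Hx Hy H. rewrite <- (exp_ln x), <- (exp_ln y) by assumption. apply exp_le, H. Qed.

Lemma ln_le_sub1 t : 0 < t -> ln t <= t - 1.
Proof. intros Ht. pose proof (exp_ineq1_le (ln t)) as H. rewrite exp_ln in H; lra. Qed.

Lemma ln2_bounds : 0 < ln 2 <= 1.
Proof. pose proof ln_lt_2. pose proof (ln_le_sub1 2). lra. Qed.

Lemma one_le_neg_ln y : 0 < y <= / 3 -> 1 <= - ln y.
Proof.
  intros Hy. assert (Hln : ln y <= ln (/ 3)) by (apply ln_le; lra).
  rewrite ln_Rinv in Hln by lra.
  assert (1 <= ln 3) by (rewrite <- (ln_exp 1); apply ln_le; [apply exp_pos | apply exp_le_3]).
  lra.
Qed.

Lemma ln_le_linear q g : 0 <= q -> 0 < g ->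
  exists C, forall L, 0 < L -> q * ln L <= g * L + C.
Proof.
  intros Hq Hg. set (lam := g / (q + 1)).
  assert (Hlam : 0 < lam) by (unfold lam; apply Rdiv_lt_0_compat; lra).
  exists (q * (- 1 - ln lam)). intros L HL.
  assert (HlnL : ln L <= lam * L - 1 - ln lam).
  { pose proof (ln_le_sub1 (lam * L) ltac:(nra)) as H.
    rewrite ln_mult in H by lra. lra. }
  assert (Hqlam : q * lam <= g).
  { unfold lam. apply Rmult_le_reg_r with (q + 1); [lra|].
    replace (q * (g / (q + 1)) * (q + 1)) with (q * g) by (field; lra). nra. }
  assert (q * ln L <= q * (lam * L - 1 - ln lam)) by (apply Rmult_le_compat_l; lra).
  nra.
Qed.

Lemma rolle_is_derive (F dF : R -> R) a b : a < b ->
  (forall c, a <= c <= b -> is_derive F c (dF c)) -> F a = F b ->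
  exists c, a < c < b /\ dF c = 0.
Proof.
  intros Hab HF Hab'.
  destruct (MVT_cor2 F dF a b Hab) as [c [E Hc]].
  { intros c Hc. apply is_derive_Reals, HF, Hc. }
  exists c. split; [exact Hc|].
  apply (Rmult_eq_reg_r (b - a)); lra.
Qed.

Lemma three_point_interpolation (P dP ddP : R -> R) p u q : p < u < q ->
  (forall t, p <= t <= q -> is_derive P t (dP t)) ->
  (forall t, p <= t <= q -> is_derive dP t (ddP t)) ->
  exists c, p < c < q /\
    P u = P q + (u - q) / (p - q) * (P p - P q) + (u - p) * (u - q) / 2 * ddP c.
Proof.
  intros Hu HP HdP.
  (* K makes the interpolation error h vanish at p, u and q *)
  set (K := (P u - P q - (u - q) / (p - q) * (P p - P q)) / ((u - p) * (u - q))).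
  set (h := fun t => P t - P q - (t - q) / (p - q) * (P p - P q) - K * ((t - p) * (t - q))).
  set (h1 := fun t => dP t - (P p - P q) / (p - q) - K * (2 * t - p - q)).
  assert (Hh : forall t, p <= t <= q -> is_derive h t (h1 t)).
  { intros t Ht. unfold h, h1. auto_derive.
    - exists (dP t). now apply HP.
    - replace (Derive (fun x => P x) t) with (dP t)
        by (symmetry; apply is_derive_unique; now apply HP).
      field. lra. }
  assert (Hh1 : forall t, p <= t <= q -> is_derive h1 t (ddP t - 2 * K)).
  { intros t Ht. unfold h1. auto_derive.
    - exists (ddP t). now apply HdP.
    - replace (Derive (fun x => dP x) t) with (ddP t)
        by (symmetry; apply is_derive_unique; now apply HdP).
      ring. }
  destruct (rolle_is_derive h h1 p u) as [c1 [Hc1 E1]];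
    [lra | intros; apply Hh; lra | unfold h, K; field; split; lra |].
  destruct (rolle_is_derive h h1 u q) as [c2 [Hc2 E2]];
    [lra | intros; apply Hh; lra | unfold h, K; field; split; lra |].
  destruct (rolle_is_derive h1 (fun t => ddP t - 2 * K) c1 c2) as [c [Hc E]];
    [lra | intros; apply Hh1; lra | lra |].
  exists c. split; [lra|].
  replace (ddP c) with (2 * K) by lra. unfold K. field. split; lra.
Qed.

Lemma decreasing_reflects_closeness (Psi : R -> R) lb ub v e :
  (forall s t, lb < s -> s < t -> t < ub -> Psi t < Psi s) -> lb < v < ub -> 0 < e ->
  exists eta, 0 < eta /\
    forall w, lb < w < ub -> Rabs (Psi w - Psi v) < eta -> Rabs (w - v) < e.
Proof.
  intros Hdec Hv He.
  set (m := Rmin e (Rmin (v - lb) (ub - v))).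
  assert (Hm : 0 < m /\ m <= e /\ m <= v - lb /\ m <= ub - v).
  { pose proof (Rmin_l e (Rmin (v - lb) (ub - v))).
    pose proof (Rmin_r e (Rmin (v - lb) (ub - v))).
    pose proof (Rmin_l (v - lb) (ub - v)). pose proof (Rmin_r (v - lb) (ub - v)).
    assert (0 < m) by (repeat apply Rmin_pos; lra). unfold m in *. lra. }
  set (r := m / 2).
  pose proof (Hdec (v - r) v ltac:(unfold r; lra) ltac:(unfold r; lra) ltac:(lra)).
  pose proof (Hdec v (v + r) ltac:(lra) ltac:(unfold r; lra) ltac:(unfold r; lra)).
  set (eta := Rmin (Psi (v - r) - Psi v) (Psi v - Psi (v + r))).
  exists eta. split; [apply Rmin_pos; lra|].
  intros w Hw Hpw. apply Rabs_def2 in Hpw.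
  assert (Heta : eta <= Psi (v - r) - Psi v /\ eta <= Psi v - Psi (v + r))
    by (split; [apply Rmin_l | apply Rmin_r]).
  apply Rabs_def1.
  - destruct (Rlt_or_le w (v + r)) as [|[Hgt | <-]]; [unfold r in *; lra | | lra].
    pose proof (Hdec (v + r) w ltac:(unfold r; lra) Hgt ltac:(lra)). lra.
  - destruct (Rlt_or_le (v - r) w) as [|[Hlt | ->]]; [unfold r in *; lra | | lra].
    pose proof (Hdec w (v - r) ltac:(lra) Hlt ltac:(unfold r; lra)). lra.
Qed.

Lemma nonvanishing_neg (u : R -> R) lb ub t0 :
  (forall x, lb < x < ub -> continuity_pt u x) -> (forall x, lb < x < ub -> u x <> 0) ->
  lb < t0 < ub -> u t0 < 0 -> forall x, lb < x < ub -> u x < 0.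
Proof.
  intros Hc Hnz Ht0 Hu0 x Hx.
  destruct (Rlt_or_le (u x) 0) as [Hneg | Hge]; [exact Hneg | exfalso].
  assert (Hpos : 0 < u x) by (destruct Hge; [assumption | exfalso; apply (Hnz x Hx); lra]).
  destruct (Rlt_or_le x t0) as [Hlt | [Hlt | <-]]; [| | lra].
  - destruct (Ranalysis5.IVT_interv (fun t => - u t) x t0) as [z [Hz Ez]]; try lra.
    + intros t Ht. apply continuity_pt_opp, Hc. lra.
    + apply (Hnz z); lra.
  - destruct (Ranalysis5.IVT_interv u t0 x) as [z [Hz Ez]]; try lra.
    + intros t Ht. apply Hc. lra.
    + apply (Hnz z); lra.
Qed.

Definition near0 (P : R -> Prop) : Prop :=
  exists delta, 0 < delta /\ forall x, 0 < x < delta -> P x.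

Lemma near0_and {P Q : R -> Prop} : near0 P -> near0 Q -> near0 (fun x => P x /\ Q x).
Proof.
  intros [d1 [Hd1 HP]] [d2 [Hd2 HQ]]. exists (Rmin d1 d2). split; [now apply Rmin_pos|].
  intros x Hx. pose proof (Rmin_l d1 d2). pose proof (Rmin_r d1 d2).
  split; [apply HP | apply HQ]; lra.
Qed.

Lemma little_o_between (u v w : R -> R) e : little_o (fun x => u x - v x) w -> 0 < e ->
  near0 (fun x => v x - e * Rabs (w x) <= u x <= v x + e * Rabs (w x)).
Proof.
  intros Ho He. destruct (Ho e He) as [delta [Hd H]].
  exists delta. split; [exact Hd|]. intros x Hx. apply Rabs_le_between', H, Hx.
Qed.

(** * Power-logarithm monomials *)

(* powlog s q x = x^s (-log x)^q = x^s l(x)^(-q) for 0 < x < 1; it is used with q = -m. *)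
Definition powlog (s q x : R) : R := exp (s * ln x + q * ln (- ln x)).

Lemma powlog_pos s q x : 0 < powlog s q x.
Proof. apply exp_pos. Qed.

Lemma ln_powlog s q x : ln (powlog s q x) = s * ln x + q * ln (- ln x).
Proof. apply ln_exp. Qed.

Lemma powlog_pred_div_sqr s q x :
  powlog (s - 1) q x / powlog s q x ^ 2 = / powlog (s + 1) q x.
Proof.
  unfold powlog. set (B := s * ln x + q * ln (- ln x)).
  replace (exp B ^ 2) with (exp (B + B)) by (rewrite exp_plus; ring).
  unfold Rdiv. rewrite <- !exp_Ropp, <- exp_plus. f_equal. unfold B. ring.
Qed.

Lemma ln_ell x : 0 < x < 1 -> ln (ell x) = - ln (- ln x).
Proof.
  intros Hx. assert (ln x < 0) by (rewrite <- ln_1; apply ln_increasing; lra).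
  unfold ell. replace (- / ln x) with (/ - ln x) by (field; lra).
  rewrite ln_Rinv by lra. ring.
Qed.

Lemma Rpower_ell_powlog s r x : 0 < x < 1 ->
  Rpower x s * Rpower (ell x) r = powlog s (- r) x.
Proof.
  intros Hx. unfold Rpower, powlog. rewrite <- exp_plus, ln_ell by exact Hx.
  f_equal. ring.
Qed.

Lemma Rpower_powerRZ_ell_powlog s (m : Z) x : 0 < x < 1 ->
  Rpower x s * powerRZ (ell x) m = powlog s (- IZR m) x.
Proof.
  intros Hx. assert (ln x < 0) by (rewrite <- ln_1; apply ln_increasing; lra).
  rewrite powerRZ_Rpower by (unfold ell; apply Ropp_0_gt_lt_contravar, Rinv_lt_0_compat; lra).
  apply Rpower_ell_powlog, Hx.
Qed.

Lemma powlog_small K s q : 0 < K -> 1 < s -> 0 <= q ->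
  near0 (fun x => K * powlog s q x <= x).
Proof.
  intros HK Hs Hq. destruct (ln_le_linear q ((s - 1) / 2) Hq ltac:(lra)) as [C HC].
  set (r := exp (2 * (- ln K - C) / (s - 1))).
  exists (Rmin 1 r). split; [apply Rmin_pos; [lra | apply exp_pos]|].
  intros x [Hx Hxr]. pose proof (Rmin_l 1 r). pose proof (Rmin_r 1 r).
  assert (Hlnx : ln x <= 2 * (- ln K - C) / (s - 1)).
  { rewrite <- (ln_exp (2 * (- ln K - C) / (s - 1))). apply ln_le; fold r; lra. }
  assert (Hln : ln x < 0) by (rewrite <- ln_1; apply ln_increasing; lra).
  pose proof (HC (- ln x) ltac:(lra)).
  assert ((s - 1) / 2 * ln x <= - ln K - C).
  { apply (Rmult_le_compat_l ((s - 1) / 2)) in Hlnx; [|lra].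
    replace ((s - 1) / 2 * (2 * (- ln K - C) / (s - 1))) with (- ln K - C) in Hlnx
      by (field; lra).
    exact Hlnx. }
  apply ln_le_inv; [apply Rmult_lt_0_compat; [exact HK | apply powlog_pos] | exact Hx |].
  rewrite ln_mult, ln_powlog by (try apply powlog_pos; lra). lra.
Qed.

Lemma powlog_le_Rpower s q delta : 0 <= q -> 0 < delta ->
  exists C, 0 < C /\ forall x, 0 < x < 1 -> powlog s q x <= C * Rpower x (s - delta).
Proof.
  intros Hq Hd. destruct (ln_le_linear q delta Hq Hd) as [C HC].
  exists (exp C). split; [apply exp_pos|]. intros x Hx.
  assert (ln x < 0) by (rewrite <- ln_1; apply ln_increasing; lra).
  pose proof (HC (- ln x) ltac:(lra)).
  unfold powlog, Rpower. rewrite <- exp_plus. apply exp_le. lra.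
Qed.

Lemma cube_over_powlog_le a al p : 0 < a -> 1 < al -> 0 <= p ->
  exists K, forall y eps c, 0 < y <= / 3 -> 0 < eps < y ->
    2 * eps <= 3 / 2 * a * powlog al p y -> y / 2 <= c <= y ->
    eps ^ 3 / powlog (al + 1) p c <= K * powlog (2 - / al) (p / al) eps.
Proof.
  intros Ha Hal Hp. set (K2 := ln (3 / 2 * a)). set (ia := / al).
  assert (Hia : 0 < ia) by (apply Rinv_0_lt_compat; lra).
  exists (exp ((al + 1) * ln 2 + (1 + ia) * (K2 - ln 2))).
  intros y eps c Hy He Hg Hc.
  pose proof (one_le_neg_ln y Hy) as Hly. pose proof ln2_bounds.
  assert (Hlc : ln c <= ln y) by (apply ln_le; lra).
  apply ln_le_inv; [apply Rdiv_lt_0_compat; [apply pow_lt; lra | apply powlog_pos] |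
                    apply Rmult_lt_0_compat; [apply exp_pos | apply powlog_pos] |].
  rewrite ln_div, ln_pow, ln_mult, ln_exp, !ln_powlog by
    (try apply pow_lt; try apply exp_pos; try apply powlog_pos; lra).
  assert (F1 : ln eps + ln 2 <= K2 + (al * ln y + p * ln (- ln y))).
  { rewrite <- ln_powlog. unfold K2. rewrite <- !ln_mult by (try apply powlog_pos; lra).
    apply ln_le; lra. }
  assert (F2 : ln (- ln y) <= ln (- ln eps)).
  { apply ln_le; [lra|]. assert (ln eps <= ln y) by (apply ln_le; lra). lra. }
  assert (F3 : ln y - ln 2 <= ln c) by (rewrite <- ln_div by lra; apply ln_le; lra).
  assert (F4 : ln (- ln y) <= ln (- ln c)) by (apply ln_le; lra).
  simpl INR. fold ia. change (p / al) with (p * ia).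
  (* F1 taken to the power 1 + 1/al bounds y^(al+1) below by eps^(1+1/al), up to logs *)
  assert (A1 : (1 + ia) * (ln eps + ln 2) <= (1 + ia) * (K2 + (al * ln y + p * ln (- ln y))))
    by (apply Rmult_le_compat_l; lra).
  assert (A2 : (al + 1) * (ln y - ln 2) <= (al + 1) * ln c) by (apply Rmult_le_compat_l; lra).
  assert (A3 : p * ln (- ln y) <= p * ln (- ln c)) by (apply Rmult_le_compat_l; lra).
  assert (A4 : p * ia * ln (- ln y) <= p * ia * ln (- ln eps))
    by (apply Rmult_le_compat_l; [apply Rmult_le_pos|]; lra).
  assert (E1 : ia * (al * ln y) = ln y) by (unfold ia; field; lra).
  lra.
Qed.

Lemma cube_over_powlog_ge a al p : 0 < a -> 1 < al -> 0 <= p ->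
  exists K, 0 < K /\ forall y eps c, 0 < y <= / 3 -> y <= a / 4 -> 0 < eps < y ->
    / 2 * a * powlog al p y <= 2 * eps -> y / 2 <= c <= y ->
    K * powlog (2 - / al) (p / al) eps <= eps ^ 3 / powlog (al + 1) p c.
Proof.
  intros Ha Hal Hp. set (K4 := ln (/ 2 * a)). set (ia := / al).
  assert (Hia : 0 < ia) by (apply Rinv_0_lt_compat; lra).
  exists (exp (- p * ln 2 - (1 + ia) * (ln 2 - K4) - p * ia * ln (al + 1))).
  split; [apply exp_pos|].
  intros y eps c Hy Hya He Hg Hc.
  pose proof (one_le_neg_ln y Hy) as Hly. pose proof ln2_bounds.
  assert (Hlc : ln c <= ln y) by (apply ln_le; lra).
  assert (Hle : ln eps < 0) by (rewrite <- ln_1; apply ln_increasing; lra).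
  apply ln_le_inv; [apply Rmult_lt_0_compat; [apply exp_pos | apply powlog_pos] |
                    apply Rdiv_lt_0_compat; [apply pow_lt; lra | apply powlog_pos] |].
  rewrite ln_div, ln_pow, ln_mult, ln_exp, !ln_powlog by
    (try apply pow_lt; try apply exp_pos; try apply powlog_pos; lra).
  assert (G1 : K4 + (al * ln y + p * ln (- ln y)) <= ln eps + ln 2).
  { rewrite <- ln_powlog. unfold K4. rewrite <- !ln_mult by (try apply powlog_pos; lra).
    apply ln_le; [apply Rmult_lt_0_compat; [lra | apply powlog_pos] | lra]. }
  assert (HLy : 0 <= ln (- ln y)) by (rewrite <- ln_1; apply ln_le; lra).
  (* y <= a / 4 gives eps >= y^(al+1), i.e. -ln eps <= (al + 1) (-ln y) *)
  assert (G2 : ln (- ln eps) <= ln (al + 1) + ln (- ln y)).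
  { assert (ln y <= K4 - ln 2).
    { unfold K4. rewrite <- ln_div by lra. apply ln_le; lra. }
    assert (0 <= p * ln (- ln y)) by (apply Rmult_le_pos; lra).
    rewrite <- ln_mult by lra. apply ln_le; [lra | nra]. }
  assert (G3 : ln (- ln c) <= ln 2 + ln (- ln y)).
  { assert (ln y - ln 2 <= ln c) by (rewrite <- ln_div by lra; apply ln_le; lra).
    rewrite <- ln_mult by lra. apply ln_le; lra. }
  simpl INR. fold ia. change (p / al) with (p * ia).
  assert (A1 : (1 + ia) * (K4 + (al * ln y + p * ln (- ln y))) <= (1 + ia) * (ln eps + ln 2))
    by (apply Rmult_le_compat_l; lra).
  assert (A2 : (al + 1) * ln c <= (al + 1) * ln y) by (apply Rmult_le_compat_l; lra).
  assert (A3 : p * ln (- ln c) <= p * (ln 2 + ln (- ln y))) by (apply Rmult_le_compat_l; lra).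
  assert (A4 : p * ia * ln (- ln eps) <= p * ia * (ln (al + 1) + ln (- ln y)))
    by (apply Rmult_le_compat_l; [apply Rmult_le_pos|]; lra).
  assert (E1 : ia * (al * ln y) = ln y) by (unfold ia; field; lra).
  lra.
Qed.

(** * The flow near 0 *)

Set Implicit Arguments.

Record flow_setting (f xi dxi Psi : R -> R) (a al p d x1 : R) : Prop := {
  fs_a_pos : 0 < a;
  fs_al_gt1 : 1 < al;
  fs_p_nonneg : 0 <= p;
  fs_x1_pos : 0 < x1;
  fs_x1_le_d : x1 <= d;
  fs_x1_le_third : x1 <= / 3;
  fs_x1_le_quarter_a : x1 <= a / 4;
  fs_xi_deriv : forall x, 0 < x < d -> derivable_pt_lim xi x (dxi x);
  fs_xi_neg : forall x, 0 < x < d -> xi x < 0;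
  fs_Psi_deriv : forall x, 0 < x < d -> derivable_pt_lim Psi x (/ xi x);
  fs_f_step : forall x, 0 < x < d -> 0 < f x < d /\ Psi (f x) = Psi x + 1;
  fs_xi_bounds : forall x, 0 < x < x1 ->
    - (3 / 2) * a * powlog al p x <= xi x <= - / 2 * a * powlog al p x;
  fs_dxi_bounds : forall x, 0 < x < x1 ->
    - (3 / 2) * a * al * powlog (al - 1) p x <= dxi x <= - / 2 * a * al * powlog (al - 1) p x;
  fs_gap_bounds : forall x, 0 < x < x1 ->
    / 2 * a * powlog al p x <= x - f x <= 3 / 2 * a * powlog al p x;
  fs_gap_small : forall x, 0 < x < x1 -> 3 * a * powlog al p x <= x }.

Unset Implicit Arguments.

Section Flow.

Variables (f xi dxi Psi : R -> R) (a al p d x1 : R).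
Hypothesis HS : flow_setting f xi dxi Psi a al p d x1.

Lemma Psi_decreasing x y : 0 < x -> x < y -> y < d -> Psi y < Psi x.
Proof.
  intros Hx Hxy Hy.
  destruct (MVT_cor2 Psi (fun t => / xi t) x y Hxy) as [c [E Hc]].
  { intros c Hc. apply (fs_Psi_deriv HS). lra. }
  assert (/ xi c < 0) by (apply Rinv_lt_0_compat, (fs_xi_neg HS); lra).
  nra.
Qed.

Lemma Psi_antitone x y : 0 < x -> x <= y -> y < d -> Psi y <= Psi x.
Proof.
  intros Hx [Hxy | <-] Hy; [left; now apply Psi_decreasing | right; reflexivity].
Qed.

Lemma Psi_le_rev x y : 0 < x < d -> 0 < y < d -> Psi x <= Psi y -> y <= x.
Proof.
  intros Hx Hy H. destruct (Rle_or_lt y x) as [|Hlt]; [assumption|].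
  pose proof (Psi_decreasing x y (proj1 Hx) Hlt (proj2 Hy)). lra.
Qed.

Lemma Psi_inj x y : 0 < x < d -> 0 < y < d -> Psi x = Psi y -> y = x.
Proof.
  intros Hx Hy H. apply Rle_antisym; apply Psi_le_rev; auto; lra.
Qed.

Lemma f_lt_id x : 0 < x < d -> f x < x.
Proof.
  intros Hx. destruct (fs_f_step HS Hx) as [Hfx HPsi].
  destruct (Rlt_or_le (f x) x) as [|Hle]; [assumption|].
  pose proof (Psi_antitone x (f x) (proj1 Hx) Hle (proj2 Hfx)). lra.
Qed.

Lemma f_increasing x y : 0 < x -> x < y -> y < d -> f x < f y.
Proof.
  intros Hx Hxy Hy.
  destruct (fs_f_step HS (x := x) ltac:(lra)) as [Hfx HPx].
  destruct (fs_f_step HS (x := y) ltac:(lra)) as [Hfy HPy].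
  pose proof (Psi_decreasing x y Hx Hxy Hy).
  destruct (Rlt_or_le (f x) (f y)) as [|Hle]; [assumption|].
  pose proof (Psi_antitone (f y) (f x) (proj1 Hfy) Hle (proj2 Hfx)). lra.
Qed.

Lemma f_continuous x : 0 < x < d -> continuity_pt f x.
Proof.
  intros Hx. destruct (fs_f_step HS Hx) as [Hfx HPfx].
  unfold continuity_pt, continue_in, limit1_in, limit_in. simpl. unfold R_dist.
  intros e He.
  destruct (decreasing_reflects_closeness Psi 0 d (f x) e) as [eta [Heta Hclose]];
    [intros s t Hs Hst Ht; now apply Psi_decreasing | exact Hfx | exact He |].
  assert (HPsi : continuity_pt Psi x).
  { apply derivable_continuous_pt. exists (/ xi x). apply (fs_Psi_deriv HS), Hx. }
  destruct (HPsi eta Heta) as [delta [Hdelta Hnear]]. simpl in Hnear. unfold R_dist in Hnear.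
  exists (Rmin delta (Rmin x (d - x))). split; [repeat apply Rmin_pos; lra|].
  intros z [[_ Hzx] Hz].
  pose proof (Rmin_l delta (Rmin x (d - x))). pose proof (Rmin_r delta (Rmin x (d - x))).
  pose proof (Rmin_l x (d - x)). pose proof (Rmin_r x (d - x)).
  apply Rabs_def2 in Hz as Hz'.
  destruct (fs_f_step HS (x := z) ltac:(lra)) as [Hfz HPfz].
  apply Hclose; [exact Hfz|]. rewrite HPfz, HPfx.
  replace (Psi z + 1 - (Psi x + 1)) with (Psi z - Psi x) by ring.
  apply Hnear. split; [split; [exact I | exact Hzx] | lra].
Qed.

Lemma dxi_neg x : 0 < x < x1 -> dxi x < 0.
Proof.
  intros Hx. pose proof (fs_dxi_bounds HS Hx). pose proof (fs_a_pos HS). pose proof (fs_al_gt1 HS).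
  pose proof (powlog_pos (al - 1) p x).
  assert (0 < a * al * powlog (al - 1) p x) by (repeat apply Rmult_lt_0_compat; lra).
  lra.
Qed.

Lemma xi_decreasing x y : 0 < x -> x < y -> y < x1 -> xi y < xi x.
Proof.
  intros Hx Hxy Hy. pose proof (fs_x1_le_d HS).
  destruct (MVT_cor2 xi dxi x y Hxy) as [c [E Hc]].
  { intros c Hc. apply (fs_xi_deriv HS). lra. }
  pose proof (dxi_neg c ltac:(lra)). nra.
Qed.

Lemma gap_increasing x x' : 0 < x -> x < x' -> x' < x1 -> f x' <= x -> x - f x < x' - f x'.
Proof.
  intros Hx Hxx' Hx' Hf. pose proof (fs_x1_le_d HS).
  destruct (fs_f_step HS (x := x) ltac:(lra)) as [Hfx HPx].
  destruct (fs_f_step HS (x := x') ltac:(lra)) as [Hfx' HPx'].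
  pose proof (f_increasing x x' Hx Hxx' ltac:(lra)) as Hff.
  destruct (MVT_cor2 Psi (fun t => / xi t) x x' Hxx') as [c1 [E1 Hc1]].
  { intros c Hc. apply (fs_Psi_deriv HS). lra. }
  destruct (MVT_cor2 Psi (fun t => / xi t) (f x) (f x') Hff) as [c2 [E2 Hc2]].
  { intros c Hc. apply (fs_Psi_deriv HS). lra. }
  pose proof (xi_decreasing c2 c1 ltac:(lra) ltac:(lra) ltac:(lra)).
  pose proof (fs_xi_neg HS (x := c1) ltac:(lra)). pose proof (fs_xi_neg HS (x := c2) ltac:(lra)).
  (* Psi (f x') - Psi (f x) = Psi x' - Psi x, while |xi c1| > |xi c2| because c2 < c1 *)
  assert (E : / xi c1 * (x' - x) = / xi c2 * (f x' - f x)) by lra.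
  apply (Rmult_eq_compat_l (xi c1 * xi c2)) in E.
  replace (xi c1 * xi c2 * (/ xi c1 * (x' - x))) with ((x' - x) * xi c2) in E by (field; lra).
  replace (xi c1 * xi c2 * (/ xi c2 * (f x' - f x))) with ((f x' - f x) * xi c1) in E
    by (field; lra).
  nra.
Qed.

Definition Psi_dd (c : R) : R := - dxi c / xi c ^ 2.

Definition length_scale (eps : R) : R := powlog (2 - / al) (p / al) eps.

Lemma Psi_dd_bounds c : 0 < c < x1 ->
  2 * al / (9 * a) / powlog (al + 1) p c <= Psi_dd c <= 6 * al / a / powlog (al + 1) p c.
Proof.
  intros Hc. pose proof (fs_a_pos HS). pose proof (fs_al_gt1 HS).
  destruct (fs_xi_bounds HS Hc) as [X1 X2]. destruct (fs_dxi_bounds HS Hc) as [Y1 Y2].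
  pose proof (powlog_pred_div_sqr al p c) as Hratio.
  set (P := powlog al p c) in *. set (Pm := powlog (al - 1) p c) in *.
  assert (HP : 0 < P) by apply powlog_pos. assert (HPm : 0 < Pm) by apply powlog_pos.
  assert (Hsq : / 4 * a ^ 2 * P ^ 2 <= xi c ^ 2 <= 9 / 4 * a ^ 2 * P ^ 2) by (split; nra).
  assert (HaPm : 0 < a * al * Pm) by (repeat apply Rmult_lt_0_compat; lra).
  assert (HaP : 0 < a ^ 2 * P ^ 2) by (apply Rmult_lt_0_compat; apply pow_lt; lra).
  unfold Psi_dd, Rdiv in *. rewrite <- Hratio.
  split.
  - replace (2 * al * / (9 * a) * (Pm * / P ^ 2))
      with (/ 2 * a * al * Pm * / (9 / 4 * a ^ 2 * P ^ 2)) by (field; lra).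
    apply Rmult_le_compat; [lra | left; apply Rinv_0_lt_compat; lra | lra |].
    apply Rinv_le_contravar; lra.
  - replace (6 * al * / a * (Pm * / P ^ 2))
      with (3 / 2 * a * al * Pm * / (/ 4 * a ^ 2 * P ^ 2)) by (field; lra).
    apply Rmult_le_compat; [lra | left; apply Rinv_0_lt_compat; lra | lra |].
    apply Rinv_le_contravar; lra.
Qed.

Lemma level_facts eps y : 0 < y < x1 -> y - f y = 2 * eps ->
  0 < eps < y /\ y / 2 <= f y /\ / 2 * a * powlog al p y <= 2 * eps <= 3 / 2 * a * powlog al p y.
Proof.
  intros Hy Hg. destruct (fs_gap_bounds HS Hy). pose proof (fs_gap_small HS Hy).
  pose proof (powlog_pos al p y). pose proof (fs_a_pos HS).
  assert (0 < / 2 * a * powlog al p y) by (apply Rmult_lt_0_compat; lra).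
  repeat split; lra.
Qed.

Lemma curvature_term_le : exists K, forall eps y c, 0 < y < x1 -> y - f y = 2 * eps ->
  f y < c < y -> eps ^ 3 * Psi_dd c <= K * length_scale eps.
Proof.
  pose proof (fs_a_pos HS). pose proof (fs_al_gt1 HS). pose proof (fs_x1_le_third HS).
  destruct (cube_over_powlog_le a al p ltac:(lra) ltac:(lra) (fs_p_nonneg HS)) as [K HK].
  exists (6 * al / a * K). intros eps y c Hy Hg Hc.
  destruct (level_facts eps y Hy Hg) as [He [Hfy [Hg1 Hg2]]].
  destruct (Psi_dd_bounds c ltac:(lra)) as [_ Hup].
  pose proof (powlog_pos (al + 1) p c).
  apply Rle_trans with (6 * al / a * (eps ^ 3 / powlog (al + 1) p c)).
  - replace (6 * al / a * (eps ^ 3 / powlog (al + 1) p c))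
      with (eps ^ 3 * (6 * al / a / powlog (al + 1) p c)) by (field; lra).
    apply Rmult_le_compat_l; [apply pow_le; lra | exact Hup].
  - rewrite Rmult_assoc. apply Rmult_le_compat_l; [apply Rlt_le, Rdiv_lt_0_compat; lra|].
    apply (HK y); lra.
Qed.

Lemma curvature_term_ge : exists K, 0 < K /\ forall eps y c, 0 < y < x1 ->
  y - f y = 2 * eps -> f y < c < y -> K * length_scale eps <= eps ^ 3 * Psi_dd c.
Proof.
  pose proof (fs_a_pos HS). pose proof (fs_al_gt1 HS).
  pose proof (fs_x1_le_third HS). pose proof (fs_x1_le_quarter_a HS).
  destruct (cube_over_powlog_ge a al p ltac:(lra) ltac:(lra) (fs_p_nonneg HS)) as [K [HK0 HK]].
  exists (2 * al / (9 * a) * K). split; [apply Rmult_lt_0_compat; [apply Rdiv_lt_0_compat|]; lra|].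
  intros eps y c Hy Hg Hc.
  destruct (level_facts eps y Hy Hg) as [He [Hfy [Hg1 Hg2]]].
  destruct (Psi_dd_bounds c ltac:(lra)) as [Hlow _].
  pose proof (powlog_pos (al + 1) p c).
  apply Rle_trans with (2 * al / (9 * a) * (eps ^ 3 / powlog (al + 1) p c)).
  - rewrite Rmult_assoc. apply Rmult_le_compat_l; [apply Rlt_le, Rdiv_lt_0_compat; lra|].
    apply (HK y); lra.
  - replace (2 * al / (9 * a) * (eps ^ 3 / powlog (al + 1) p c))
      with (eps ^ 3 * (2 * al / (9 * a) / powlog (al + 1) p c)) by (field; lra).
    apply Rmult_le_compat_l; [apply pow_le; lra | exact Hlow].
Qed.

Lemma length_scale_le_Rpower : exists delta C, 0 < delta /\
  forall eps, 0 < eps < 1 -> length_scale eps <= C * Rpower eps (1 + delta).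
Proof.
  pose proof (fs_al_gt1 HS).
  assert (Hia : / al < 1) by (rewrite <- Rinv_1; apply Rinv_lt_contravar; lra).
  assert (Hpa : 0 <= p / al) by (apply Rdiv_le_0_compat; [apply (fs_p_nonneg HS) | lra]).
  destruct (powlog_le_Rpower (2 - / al) (p / al) ((1 - / al) / 2) Hpa ltac:(lra))
    as [C [_ HC]].
  exists ((1 - / al) / 2), C. split; [lra|]. intros eps He.
  replace (1 + (1 - / al) / 2) with (2 - / al - (1 - / al) / 2) by lra.
  exact (HC eps He).
Qed.

(** * The orbit of x0 *)

Section Orbit.

Variable x0 : R.
Hypothesis Hx0 : 0 < x0 < x1.

Local Notation orbit k := (iterate f k x0).
Local Notation gap k := (orbit k - orbit (S k)).

Lemma orbit_spec k : 0 < orbit k <= x0 /\ Psi (orbit k) = Psi x0 + INR k.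
Proof.
  pose proof (fs_x1_le_d HS). induction k as [|k [[Hpos Hle] HPsi]]; [simpl; lra|].
  simpl iterate. destruct (fs_f_step HS (x := orbit k) ltac:(lra)) as [Hf HPf].
  pose proof (f_lt_id (orbit k) ltac:(lra)). rewrite S_INR. split; lra.
Qed.

Lemma orbit_step k : orbit (S k) < orbit k.
Proof.
  pose proof (fs_x1_le_d HS). destruct (orbit_spec k) as [Hk _].
  apply f_lt_id. lra.
Qed.

Lemma orbit_antitone j k : (j <= k)%nat -> orbit k <= orbit j.
Proof.
  induction 1 as [|k _ IH]; [lra|]. pose proof (orbit_step k). lra.
Qed.

Lemma orbit_lt z : 0 < z -> exists k, orbit k < z.
Proof.
  intros Hz. destruct (Rle_or_lt z x0) as [Hzx | Hlt]; [|exists O; simpl; lra].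
  destruct (INR_archimed 1 (Psi z - Psi x0) ltac:(lra)) as [k Hk].
  exists k. destruct (orbit_spec k) as [[Hpos Hkx] HPsi]. pose proof (fs_x1_le_d HS).
  destruct (Rlt_or_le (orbit k) z) as [|Hle]; [assumption|].
  pose proof (Psi_antitone z (orbit k) Hz Hle ltac:(lra)). lra.
Qed.

Lemma orbit_cvg (u : nat -> R) : (forall n, 0 < u n <= orbit n) -> Un_cv u 0.
Proof.
  intros Hu e He. destruct (orbit_lt e He) as [K HK].
  exists K. intros n Hn. unfold R_dist. rewrite Rminus_0_r.
  pose proof (Hu n). pose proof (orbit_antitone K n Hn).
  rewrite Rabs_pos_eq; lra.
Qed.

Lemma gap_decreasing k : gap (S k) < gap k.
Proof.
  destruct (orbit_spec (S k)) as [[Hpos _] _]. destruct (orbit_spec k) as [[_ Hle] _].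
  pose proof (orbit_step k). pose proof (orbit_step (S k)).
  apply gap_increasing; [lra | lra | lra | right; reflexivity].
Qed.

Lemma gap_antitone j k : (j <= k)%nat -> gap k <= gap j.
Proof.
  induction 1 as [|k _ IH]; [lra|]. pose proof (gap_decreasing k). lra.
Qed.

Lemma disc_crit_S eps k : disc_crit f x0 eps (S k) <-> gap (S k) <= 2 * eps < gap k.
Proof.
  unfold disc_crit. replace (S k - 1)%nat with k by lia.
  split; [tauto | intros; split; [lia | lra]].
Qed.

Lemma disc_crit_unique eps n n' : disc_crit f x0 eps n -> disc_crit f x0 eps n' -> n = n'.
Proof.
  intros [Hn [H1 H2]] [Hn' [H1' H2']].
  destruct (Nat.lt_trichotomy n n') as [Hlt | [Heq | Hlt]]; [exfalso | exact Heq | exfalso].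
  - pose proof (gap_antitone n (n' - 1) ltac:(lia)) as Hgap.
    replace (S (n' - 1)) with n' in Hgap by lia. lra.
  - pose proof (gap_antitone n' (n - 1) ltac:(lia)) as Hgap.
    replace (S (n - 1)) with n in Hgap by lia. lra.
Qed.

Lemma disc_crit_exists eps : 0 < eps -> 2 * eps < gap 0 -> exists k, disc_crit f x0 eps (S k).
Proof.
  intros He Hg.
  assert (Hsearch : forall K, gap K <= 2 * eps -> exists k, disc_crit f x0 eps (S k)).
  { induction K as [|K IH]; intros HK; [lra|].
    destruct (Rle_or_lt (gap K) (2 * eps)); [now apply IH|].
    exists K. apply disc_crit_S. lra. }
  destruct (orbit_lt (2 * eps) ltac:(lra)) as [K HK].
  apply (Hsearch K). destruct (orbit_spec (S K)) as [[Hpos _] _]. lra.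
Qed.

Lemma orbit_bracket y : 0 < y < x0 -> exists k, orbit (S k) <= y < orbit k.
Proof.
  intros Hy.
  assert (Hsearch : forall K, orbit K <= y -> exists k, orbit (S k) <= y < orbit k).
  { induction K as [|K IH]; intros HK; [simpl in HK; lra|].
    destruct (Rle_or_lt (orbit K) y); [now apply IH|]. exists K. lra. }
  destruct (orbit_lt y ltac:(lra)) as [K HK]. apply (Hsearch K). lra.
Qed.

Lemma gap_lt_bracket k y y' : orbit (S k) <= y < y' -> y' <= orbit k -> y - f y < y' - f y'.
Proof.
  intros Hy Hy'. pose proof (fs_x1_le_d HS).
  destruct (orbit_spec (S k)) as [[Hpos _] _]. destruct (orbit_spec k) as [[_ Hle] _].
  apply gap_increasing; try lra.
  change (orbit (S k)) with (f (orbit k)) in *.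
  destruct Hy' as [Hlt | Heq]; [|subst y'; lra].
  pose proof (f_increasing y' (orbit k) ltac:(lra) Hlt ltac:(lra)). lra.
Qed.

Lemma gap_bracket k y : orbit (S k) <= y < orbit k -> gap (S k) <= y - f y < gap k.
Proof.
  intros Hy. split.
  - destruct (proj1 Hy) as [Hlt | Heq]; [|subst y; right; reflexivity].
    left. apply (gap_lt_bracket k); lra.
  - apply (gap_lt_bracket k); lra.
Qed.

Lemma cont_crit_of_level eps y : 0 < y <= x0 -> y - f y = 2 * eps ->
  cont_crit d Psi x0 eps (Psi y - Psi x0) y.
Proof.
  intros Hy Hg. pose proof (fs_x1_le_d HS).
  destruct (fs_f_step HS (x := y) ltac:(lra)) as [Hfy HPfy].
  pose proof (Psi_antitone y x0 (proj1 Hy) (proj2 Hy) ltac:(lra)).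
  split; [lra|]. split; [split; [lra | ring]|].
  exists (f y). split; [split; [exact Hfy | rewrite HPfy; ring] | exact Hg].
Qed.

Lemma cont_crit_char eps n tau y : 0 < eps -> 2 * eps < gap 0 ->
  disc_crit f x0 eps n -> cont_crit d Psi x0 eps tau y ->
  exists k, n = S k /\ orbit (S k) <= y < orbit k /\ y - f y = 2 * eps /\ tau = Psi y - Psi x0.
Proof.
  intros He Hg Hn [Htau [[Hy HPy] [y1 [[Hy1 HPy1] Hyy1]]]].
  pose proof (fs_x1_le_d HS).
  assert (Hyx0 : y <= x0) by (apply Psi_le_rev; lra).
  destruct (fs_f_step HS Hy) as [Hfy HPfy].
  assert (y1 = f y) by (apply Psi_inj; lra). subst y1.
  assert (Hylt : y < x0) by (destruct Hyx0 as [|Heq]; [assumption | subst y; simpl in Hg; lra]).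
  destruct (orbit_bracket y ltac:(lra)) as [k Hk]. pose proof (gap_bracket k y Hk).
  exists k. split; [|repeat split; lra].
  apply (disc_crit_unique eps); [exact Hn | apply disc_crit_S; lra].
Qed.

Lemma level_point_exists eps k : gap (S k) <= 2 * eps < gap k ->
  exists y, orbit (S k) <= y < orbit k /\ y - f y = 2 * eps.
Proof.
  intros [[Hlt | Heq] Hgk].
  2: { exists (orbit (S k)). pose proof (orbit_step k). split; [lra | exact Heq]. }
  pose proof (fs_x1_le_d HS). pose proof (orbit_step k).
  destruct (orbit_spec (S k)) as [[Hpos _] _]. destruct (orbit_spec k) as [[_ Hle] _].
  destruct (Ranalysis5.IVT_interv (fun t => t - f t - 2 * eps) (orbit (S k)) (orbit k))
    as [y [Hy Ey]]; [| exact (orbit_step k) | simpl in *; lra | simpl in *; lra |].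
  - intros t Ht. apply continuity_pt_minus; [apply continuity_pt_minus|].
    + apply derivable_continuous_pt, derivable_pt_id.
    + apply f_continuous. lra.
    + apply derivable_continuous_pt, derivable_pt_const.
  - exists y. split; [|lra]. split; [lra|].
    destruct (proj2 Hy) as [|Heq]; [assumption | subst y; simpl in *; lra].
Qed.

Lemma crit_exists eps : 0 < eps -> 2 * eps < gap 0 ->
  exists n tau y, disc_crit f x0 eps n /\ cont_crit d Psi x0 eps tau y.
Proof.
  intros He Hg. destruct (disc_crit_exists eps He Hg) as [k Hk].
  destruct (level_point_exists eps k (proj1 (disc_crit_S eps k) Hk)) as [y [Hy Hgy]].
  destruct (orbit_spec (S k)) as [[Hpos _] _]. destruct (orbit_spec k) as [[_ Hle] _].
  exists (S k), (Psi y - Psi x0), y. split; [exact Hk|].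
  apply cont_crit_of_level; lra.
Qed.

Lemma length_diff_formula eps n tau y : tau = Psi y - Psi x0 ->
  cont_length eps tau y - disc_length f x0 eps n
  = y - orbit n + 2 * eps * (Psi y - Psi (orbit n)).
Proof.
  intros ->. destruct (orbit_spec n) as [_ HPsi].
  unfold cont_length, disc_length. rewrite HPsi. ring.
Qed.

Lemma length_diff_interpolation eps k y : orbit (S k) <= y < orbit k -> y - f y = 2 * eps ->
  exists c, f y < c < y /\
    y - orbit (S k) + 2 * eps * (Psi y - Psi (orbit (S k)))
    = eps * (orbit (S k) - f y) * (y - orbit (S k)) * Psi_dd c.
Proof.
  intros Hy Hg. pose proof (fs_x1_le_d HS).
  destruct (orbit_spec (S k)) as [[Hpos _] _]. destruct (orbit_spec k) as [[_ Hle] _].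
  destruct (fs_f_step HS (x := y) ltac:(lra)) as [Hfy HPfy].
  assert (Hfyu : f y < orbit (S k))
    by exact (f_increasing y (orbit k) ltac:(lra) (proj2 Hy) ltac:(lra)).
  destruct (proj1 Hy) as [Hlt | Heq].
  2: { exists ((f y + y) / 2). split; [lra|]. rewrite <- Heq. ring. }
  destruct (three_point_interpolation Psi (fun t => / xi t) Psi_dd (f y) (orbit (S k)) y)
    as [c [Hc E]]; [lra | | |].
  - intros t Ht. apply is_derive_Reals, (fs_Psi_deriv HS). lra.
  - intros t Ht. apply is_derive_inv.
    + apply is_derive_Reals, (fs_xi_deriv HS). lra.
    + pose proof (fs_xi_neg HS (x := t) ltac:(lra)). lra.
  - exists c. split; [exact Hc|].
    rewrite E, HPfy. replace (f y) with (y - 2 * eps) by lra. field. lra.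
Qed.

(* The length difference in units of length_scale; for eps outside (0, gap 0 / 2), where the
   critical data need not exist or be unique, epsilon returns an arbitrary value. *)
Definition osc_factor (eps : R) : R :=
  epsilon (inhabits 0) (fun v => forall n tau y,
    disc_crit f x0 eps n -> cont_crit d Psi x0 eps tau y ->
    cont_length eps tau y - disc_length f x0 eps n = length_scale eps * v).

Lemma length_diff_unique eps n tau y n' tau' y' : 0 < eps -> 2 * eps < gap 0 ->
  disc_crit f x0 eps n -> cont_crit d Psi x0 eps tau y ->
  disc_crit f x0 eps n' -> cont_crit d Psi x0 eps tau' y' ->
  cont_length eps tau y - disc_length f x0 eps n
  = cont_length eps tau' y' - disc_length f x0 eps n'.
Proof.
  intros He Hg Hn Hc Hn' Hc'.
  assert (n' = n) by exact (disc_crit_unique eps n' n Hn' Hn). subst n'.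
  destruct (cont_crit_char eps n tau y He Hg Hn Hc) as [k [-> [Hy [Hgy ->]]]].
  destruct (cont_crit_char eps (S k) tau' y' He Hg Hn' Hc') as [k' [Hkk' [Hy' [Hgy' ->]]]].
  injection Hkk' as <-.
  assert (y' = y).
  { destruct (Rtotal_order y y') as [Hlt | [Heq | Hlt]]; [exfalso | now symmetry | exfalso].
    - pose proof (gap_lt_bracket k y y' ltac:(lra) ltac:(lra)). lra.
    - pose proof (gap_lt_bracket k y' y ltac:(lra) ltac:(lra)). lra. }
  subst y'. reflexivity.
Qed.

Lemma osc_factor_spec eps : 0 < eps -> 2 * eps < gap 0 ->
  forall n tau y, disc_crit f x0 eps n -> cont_crit d Psi x0 eps tau y ->
  cont_length eps tau y - disc_length f x0 eps n = length_scale eps * osc_factor eps.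
Proof.
  intros He Hg. unfold osc_factor. apply epsilon_spec.
  destruct (crit_exists eps He Hg) as [n0 [tau0 [y0 [Hn0 Hc0]]]].
  pose proof (powlog_pos (2 - / al) (p / al) eps).
  exists ((cont_length eps tau0 y0 - disc_length f x0 eps n0) / length_scale eps).
  intros n tau y Hn Hc. rewrite (length_diff_unique eps n tau y n0 tau0 y0) by assumption.
  unfold length_scale in *. field. lra.
Qed.

Lemma osc_factor_bounded : exists M, forall eps, 0 < eps -> 2 * eps < gap 0 ->
  0 <= osc_factor eps <= M.
Proof.
  destruct curvature_term_le as [K HK]. exists K. intros eps He Hg.
  destruct (crit_exists eps He Hg) as [n [tau [y [Hn Hc]]]].
  pose proof (osc_factor_spec eps He Hg n tau y Hn Hc) as Hosc.
  destruct (cont_crit_char eps n tau y He Hg Hn Hc) as [k [-> [Hy [Hgy Htau]]]].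
  rewrite (length_diff_formula eps (S k) tau y Htau) in Hosc.
  destruct (length_diff_interpolation eps k y Hy Hgy) as [c [Hcy Hint]].
  rewrite Hint in Hosc.
  destruct (orbit_spec (S k)) as [[Hpos _] _]. destruct (orbit_spec k) as [[_ Hle] _].
  pose proof (fs_x1_le_d HS).
  assert (Hfyu : f y < orbit (S k))
    by exact (f_increasing y (orbit k) ltac:(lra) (proj2 Hy) ltac:(lra)).
  destruct (level_facts eps y ltac:(lra) Hgy) as [_ [Hfy _]].
  pose proof (HK eps y c ltac:(lra) Hgy Hcy) as Hup.
  destruct (Psi_dd_bounds c ltac:(lra)) as [Hlow _].
  assert (HPdd : 0 < Psi_dd c).
  { eapply Rlt_le_trans; [|exact Hlow]. pose proof (fs_a_pos HS). pose proof (fs_al_gt1 HS).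
    apply Rdiv_lt_0_compat; [apply Rdiv_lt_0_compat; lra | apply powlog_pos]. }
  set (Q := (orbit (S k) - f y) * (y - orbit (S k))).
  replace (eps * (orbit (S k) - f y) * (y - orbit (S k)) * Psi_dd c) with (eps * Q * Psi_dd c)
    in Hosc by (unfold Q; ring).
  assert (HQ : 0 <= Q <= eps ^ 2).
  { split; [unfold Q; apply Rmult_le_pos; lra|].
    (* the two factors of Q sum to y - f y = 2 eps *)
    assert (eps ^ 2 - Q = ((orbit (S k) - f y) - (y - orbit (S k))) ^ 2 / 4)
      by (unfold Q; replace eps with ((y - f y) / 2) by lra; field).
    pose proof (pow2_ge_0 ((orbit (S k) - f y) - (y - orbit (S k)))). lra. }
  assert (HN : 0 < length_scale eps) by apply powlog_pos.
  assert (Hbound : 0 <= eps * Q * Psi_dd c <= K * length_scale eps).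
  { split; [apply Rmult_le_pos; [apply Rmult_le_pos|]; lra|].
    eapply Rle_trans; [|exact Hup].
    replace (eps ^ 3 * Psi_dd c) with (eps * eps ^ 2 * Psi_dd c) by ring.
    apply Rmult_le_compat_r; [lra|]. apply Rmult_le_compat_l; lra. }
  rewrite Hosc in Hbound. split; nra.
Qed.

Lemma osc_factor_at_gap k : osc_factor (gap (S k) / 2) = 0.
Proof.
  set (eps := gap (S k) / 2).
  pose proof (orbit_step (S k)). pose proof (gap_decreasing k).
  pose proof (gap_antitone 0 k ltac:(lia)).
  destruct (orbit_spec (S k)) as [[Hpos Hle] _].
  assert (He : 0 < eps) by (unfold eps; lra).
  assert (Hg : 2 * eps < gap 0) by (unfold eps; lra).
  assert (Hn : disc_crit f x0 eps (S k)) by (apply disc_crit_S; unfold eps; lra).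
  assert (Hc : cont_crit d Psi x0 eps (Psi (orbit (S k)) - Psi x0) (orbit (S k)))
    by (apply cont_crit_of_level; [lra | unfold eps; simpl; lra]).
  pose proof (osc_factor_spec eps He Hg _ _ _ Hn Hc) as Hosc.
  rewrite length_diff_formula in Hosc by reflexivity.
  assert (HN : 0 < length_scale eps) by apply powlog_pos.
  apply (Rmult_eq_reg_l (length_scale eps)); [|lra]. rewrite <- Hosc. ring.
Qed.

Lemma orbit_midpoint k : {z | orbit (S k) < z < orbit k /\ z + f z = 2 * orbit (S k)}.
Proof.
  pose proof (fs_x1_le_d HS). pose proof (orbit_step k). pose proof (orbit_step (S k)).
  destruct (orbit_spec (S k)) as [[Hpos _] _]. destruct (orbit_spec k) as [[_ Hle] _].
  destruct (Ranalysis5.IVT_interv (fun t => t + f t - 2 * orbit (S k)) (orbit (S k)) (orbit k))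
    as [z [Hz Ez]]; [| lra | simpl in *; lra | simpl in *; lra |].
  - intros t Ht. apply continuity_pt_minus; [apply continuity_pt_plus|].
    + apply derivable_continuous_pt, derivable_pt_id.
    + apply f_continuous. lra.
    + apply derivable_continuous_pt, derivable_pt_const.
  - exists z. simpl in *. split; [split | lra].
    + destruct (proj1 Hz) as [|Heq]; [assumption | subst z; lra].
    + destruct (proj2 Hz) as [|Heq]; [assumption | subst z; lra].
Qed.

Definition mid_eps (k : nat) : R :=
  (proj1_sig (orbit_midpoint k) - f (proj1_sig (orbit_midpoint k))) / 2.

Lemma mid_eps_level k : exists z, orbit (S k) < z < orbit k /\ z - f z = 2 * mid_eps k /\
  z - orbit (S k) = mid_eps k /\ orbit (S k) - f z = mid_eps k.
Proof.
  unfold mid_eps. destruct (orbit_midpoint k) as [z [Hz Hmid]]. cbn [proj1_sig].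
  exists z. repeat split; lra.
Qed.

Lemma mid_eps_range k : 0 < mid_eps k <= orbit k /\ 2 * mid_eps k < gap 0.
Proof.
  destruct (mid_eps_level k) as [z [Hz [Hg [Hr Hl]]]].
  pose proof (gap_bracket k z ltac:(lra)). pose proof (gap_antitone 0 k ltac:(lia)).
  pose proof (orbit_step (S k)). pose proof (fs_x1_le_d HS).
  destruct (orbit_spec (S k)) as [[Hpos _] _]. destruct (orbit_spec k) as [[_ Hle] _].
  destruct (fs_f_step HS (x := z) ltac:(lra)) as [Hfz _].
  lra.
Qed.

Lemma osc_factor_at_mid : exists K, 0 < K /\ forall k, K <= osc_factor (mid_eps k).
Proof.
  destruct curvature_term_ge as [K [HK0 HK]]. exists K. split; [exact HK0|]. intros k.
  destruct (mid_eps_range k) as [[He Hek] Hg].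
  destruct (mid_eps_level k) as [z [Hz [Hgz [Hr Hl]]]].
  set (eps := mid_eps k) in *.
  destruct (orbit_spec (S k)) as [[Hpos _] _]. destruct (orbit_spec k) as [[_ Hle] _].
  assert (Hbr : orbit (S k) <= z < orbit k) by lra.
  assert (Hn : disc_crit f x0 eps (S k))
    by (apply disc_crit_S; pose proof (gap_bracket k z Hbr); lra).
  assert (Hc : cont_crit d Psi x0 eps (Psi z - Psi x0) z) by (apply cont_crit_of_level; lra).
  pose proof (osc_factor_spec eps He Hg _ _ _ Hn Hc) as Hosc.
  rewrite length_diff_formula in Hosc by reflexivity.
  destruct (length_diff_interpolation eps k z Hbr Hgz) as [c [Hcz Hint]].
  rewrite Hint, Hl, Hr in Hosc.
  pose proof (HK eps z c ltac:(lra) Hgz Hcz) as Hlow.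
  assert (HN : 0 < length_scale eps) by apply powlog_pos.
  replace (eps ^ 3 * Psi_dd c) with (eps * eps * eps * Psi_dd c) in Hlow by ring.
  rewrite Hosc in Hlow. nra.
Qed.

Lemma osc_factor_high_amplitude : high_amplitude_oscillatory osc_factor.
Proof.
  destruct osc_factor_at_mid as [K [HK0 HK]].
  exists (fun n => gap (S n) / 2), mid_eps, (K / 3), (2 * K / 3).
  assert (Hgap : forall n, 0 < gap (S n) / 2 <= orbit n).
  { intros n. pose proof (orbit_step (S n)). pose proof (orbit_step n).
    destruct (orbit_spec (S (S n))) as [[Hpos _] _]. lra. }
  split; [intros n; apply Hgap|]. split; [intros n; apply mid_eps_range|].
  split; [apply orbit_cvg, Hgap|]. split; [apply orbit_cvg; intros n; apply mid_eps_range|].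
  split; [lra|]. intros n. rewrite osc_factor_at_gap. pose proof (HK n). lra.
Qed.

Lemma gap0_bounds : 0 < gap 0 < x0.
Proof. pose proof (orbit_step 0). destruct (orbit_spec 1) as [[Hpos _] _]. simpl in *. lra. Qed.

Lemma length_difference_oscillates :
  exists k : R -> R,
    (exists eps0, 0 < eps0 /\ forall eps, 0 < eps < eps0 ->
       (exists n, disc_crit f x0 eps n) /\
       (exists tau y, cont_crit d Psi x0 eps tau y) /\
       (forall n tau y, disc_crit f x0 eps n -> cont_crit d Psi x0 eps tau y ->
          cont_length eps tau y - disc_length f x0 eps n
          = Rpower eps (2 - / al) * Rpower (ell eps) (- p / al) * k eps)) /\
    (exists M eps1, 0 < eps1 /\ forall eps, 0 < eps < eps1 -> Rabs (k eps) <= M) /\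
    high_amplitude_oscillatory k /\
    (exists delta M eps1, 0 < delta /\ 0 < eps1 /\ forall eps, 0 < eps < eps1 ->
       forall n tau y, disc_crit f x0 eps n -> cont_crit d Psi x0 eps tau y ->
         Rabs (cont_length eps tau y - disc_length f x0 eps n) <= M * Rpower eps (1 + delta)).
Proof.
  pose proof (fs_x1_le_third HS). pose proof (fs_al_gt1 HS). pose proof gap0_bounds.
  destruct osc_factor_bounded as [M HM].
  exists osc_factor. split; [|split; [|split; [exact osc_factor_high_amplitude|]]].
  - exists (gap 0 / 2). split; [lra|]. intros eps He.
    destruct (crit_exists eps (proj1 He) ltac:(lra)) as [n [tau [y [Hn Hc]]]].
    split; [eauto|]. split; [eauto|]. intros n' tau' y' Hn' Hc'.
    rewrite Rpower_ell_powlog by lra. replace (- (- p / al)) with (p / al) by (field; lra).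
    exact (osc_factor_spec eps (proj1 He) ltac:(lra) n' tau' y' Hn' Hc').
  - exists M, (gap 0 / 2). split; [lra|]. intros eps He.
    destruct (HM eps (proj1 He) ltac:(lra)). rewrite Rabs_pos_eq; lra.
  - destruct length_scale_le_Rpower as [delta [C [Hdelta HC]]].
    exists delta, (M * C), (gap 0 / 2). split; [exact Hdelta|]. split; [lra|].
    intros eps He n tau y Hn Hc.
    rewrite (osc_factor_spec eps (proj1 He) ltac:(lra) n tau y Hn Hc).
    destruct (HM eps (proj1 He) ltac:(lra)).
    pose proof (HC eps ltac:(lra)). assert (0 < length_scale eps) by apply powlog_pos.
    rewrite Rabs_pos_eq by (apply Rmult_le_pos; lra). nra.
Qed.
End Orbit.

End Flow.

Lemma first_order_bounds_near0 (f xi dxi : R -> R) (a al : R) (m : Z) :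
  0 < a -> 1 < al -> (m <= 0)%Z ->
  little_o (fun x => f x - (x - a * Rpower x al * powerRZ (ell x) m))
           (fun x => Rpower x al * powerRZ (ell x) m) ->
  asymp_equiv xi (fun x => - a * Rpower x al * powerRZ (ell x) m) ->
  asymp_equiv dxi (fun x => - a * al * Rpower x (al - 1) * powerRZ (ell x) m) ->
  near0 (fun x => x < 1 ->
    (- (3 / 2) * a * powlog al (- IZR m) x <= xi x <= - / 2 * a * powlog al (- IZR m) x) /\
    (- (3 / 2) * a * al * powlog (al - 1) (- IZR m) x <= dxi x
       <= - / 2 * a * al * powlog (al - 1) (- IZR m) x) /\
    (/ 2 * a * powlog al (- IZR m) x <= x - f x <= 3 / 2 * a * powlog al (- IZR m) x) /\
    3 * a * powlog al (- IZR m) x <= x).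
Proof.
  intros Ha Hal Hm Hf Hxi Hdxi.
  assert (Hp : 0 <= - IZR m) by (apply IZR_le in Hm; lra).
  destruct (near0_and
    (little_o_between xi (fun x => - a * Rpower x al * powerRZ (ell x) m)
       (fun x => - a * Rpower x al * powerRZ (ell x) m) (/ 2) Hxi ltac:(lra))
    (near0_and
      (little_o_between dxi (fun x => - a * al * Rpower x (al - 1) * powerRZ (ell x) m)
         (fun x => - a * al * Rpower x (al - 1) * powerRZ (ell x) m) (/ 2) Hdxi ltac:(lra))
      (near0_and
        (little_o_between f (fun x => x - a * Rpower x al * powerRZ (ell x) m)
           (fun x => Rpower x al * powerRZ (ell x) m) (a / 2) Hf ltac:(lra))
        (powlog_small (3 * a) al (- IZR m) ltac:(lra) Hal Hp))))
    as [delta [Hdelta Hnear]].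
  exists delta. split; [exact Hdelta|]. intros x Hx Hx1.
  destruct (Hnear x Hx) as [Bxi [Bdxi [Bf Bsmall]]].
  assert (Hx' : 0 < x < 1) by lra.
  assert (0 < a * powlog al (- IZR m) x) by (apply Rmult_lt_0_compat; [lra | apply powlog_pos]).
  assert (0 < a * al * powlog (al - 1) (- IZR m) x)
    by (repeat apply Rmult_lt_0_compat; [lra | lra | apply powlog_pos]).
  rewrite Rmult_assoc, Rpower_powerRZ_ell_powlog in Bxi by exact Hx'.
  rewrite (Rmult_assoc (- a * al)), Rpower_powerRZ_ell_powlog in Bdxi by exact Hx'.
  rewrite Rmult_assoc, Rpower_powerRZ_ell_powlog in Bf by exact Hx'.
  rewrite Rabs_left1 in Bxi by lra. rewrite Rabs_left1 in Bdxi by lra.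
  rewrite Rabs_pos_eq in Bf by (apply Rlt_le, powlog_pos).
  repeat split; lra.
Qed.

Lemma flow_setting_near0 (f : R -> R) (a al : R) (m : Z) (d : R) (xi dxi Psi : R -> R) :
  0 < a -> 1 < al -> (m <= 0)%Z ->
  little_o (fun x => f x - (x - a * Rpower x al * powerRZ (ell x) m))
           (fun x => Rpower x al * powerRZ (ell x) m) ->
  0 < d ->
  (forall x, 0 < x < d -> derivable_pt_lim xi x (dxi x)) ->
  (forall x, 0 < x < d -> xi x <> 0) ->
  (forall x, 0 < x < d -> derivable_pt_lim Psi x (/ xi x)) ->
  (forall x, 0 < x < d -> 0 < f x < d /\ Psi (f x) = Psi x + 1) ->
  asymp_equiv xi (fun x => - a * Rpower x al * powerRZ (ell x) m) ->
  asymp_equiv dxi (fun x => - a * al * Rpower x (al - 1) * powerRZ (ell x) m) ->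
  exists x1, flow_setting f xi dxi Psi a al (- IZR m) d x1.
Proof.
  intros Ha Hal Hm Hf Hd Hxid Hxi0 HPsi Hstep Hxi Hdxi.
  destruct (first_order_bounds_near0 f xi dxi a al m Ha Hal Hm Hf Hxi Hdxi)
    as [delta [Hdelta Hbounds]].
  set (x1 := Rmin (Rmin delta d) (Rmin (/ 3) (a / 4))).
  assert (Hx1 : 0 < x1 /\ x1 <= delta /\ x1 <= d /\ x1 <= / 3 /\ x1 <= a / 4).
  { unfold x1. pose proof (Rmin_l (Rmin delta d) (Rmin (/ 3) (a / 4))).
    pose proof (Rmin_r (Rmin delta d) (Rmin (/ 3) (a / 4))).
    pose proof (Rmin_l delta d). pose proof (Rmin_r delta d).
    pose proof (Rmin_l (/ 3) (a / 4)). pose proof (Rmin_r (/ 3) (a / 4)).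
    assert (0 < Rmin (Rmin delta d) (Rmin (/ 3) (a / 4))) by (repeat apply Rmin_pos; lra).
    lra. }
  assert (Hxi_neg : forall x, 0 < x < d -> xi x < 0).
  { apply (nonvanishing_neg xi 0 d (x1 / 2)); [| exact Hxi0 | lra |].
    - intros x Hx. apply derivable_continuous_pt. exists (dxi x). apply Hxid, Hx.
    - destruct (Hbounds (x1 / 2) ltac:(lra) ltac:(lra)) as [[_ Hup] _].
      pose proof (powlog_pos al (- IZR m) (x1 / 2)). nra. }
  assert (Hp : 0 <= - IZR m) by (apply IZR_le in Hm; lra).
  exists x1. constructor; try lra; try assumption;
    intros x Hx; pose proof (Hbounds x ltac:(lra) ltac:(lra)); tauto.
Qed.

Theorem theoremB (f : R -> R) (a alpha : R) (m : Z) :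
  parabolic_dulac f -> 0 < a -> 1 < alpha -> (m <= 0)%Z ->
  little_o (fun x => f x - (x - a * Rpower x alpha * powerRZ (ell x) m))
           (fun x => Rpower x alpha * powerRZ (ell x) m) ->
  forall (d : R) (xi dxi Psi : R -> R),
    0 < d ->
    real_analytic_on 0 d xi ->
    (forall x, 0 < x < d -> derivable_pt_lim xi x (dxi x)) ->
    (forall x, 0 < x < d -> xi x <> 0) ->
    (forall x, 0 < x < d -> derivable_pt_lim Psi x (/ xi x)) ->
    (forall x, 0 < x < d -> 0 < f x < d /\ Psi (f x) = Psi x + 1) ->
    asymp_equiv xi (fun x => - a * Rpower x alpha * powerRZ (ell x) m) ->
    asymp_equiv dxi (fun x => - a * alpha * Rpower x (alpha - 1) * powerRZ (ell x) m) ->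
    little_o (fun x => xi x - (- (x - f x) - / 2 * xi x * dxi x))
             (fun x => Rpower x (2 * alpha - 1) * powerRZ (ell x) (2 * m)) ->
    exists x1, 0 < x1 /\ forall x0, 0 < x0 < x1 ->
      exists k : R -> R,
        (exists eps0, 0 < eps0 /\ forall eps, 0 < eps < eps0 ->
           (exists n, disc_crit f x0 eps n) /\
           (exists tau y, cont_crit d Psi x0 eps tau y) /\
           (forall n tau y, disc_crit f x0 eps n -> cont_crit d Psi x0 eps tau y ->
              cont_length eps tau y - disc_length f x0 eps n
              = Rpower eps (2 - / alpha) * Rpower (ell eps) (IZR m / alpha) * k eps)) /\
        (exists M eps1, 0 < eps1 /\ forall eps, 0 < eps < eps1 -> Rabs (k eps) <= M) /\
        high_amplitude_oscillatory k /\
        (exists delta M eps1, 0 < delta /\ 0 < eps1 /\ forall eps, 0 < eps < eps1 ->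
           forall n tau y, disc_crit f x0 eps n -> cont_crit d Psi x0 eps tau y ->
             Rabs (cont_length eps tau y - disc_length f x0 eps n)
             <= M * Rpower eps (1 + delta)).
Proof.
  intros _ Ha Hal Hm Hf d xi dxi Psi Hd _ Hxid Hxi0 HPsi Hstep Hxi Hdxi _.
  destruct (flow_setting_near0 f a alpha m d xi dxi Psi Ha Hal Hm Hf Hd Hxid Hxi0 HPsi Hstep
              Hxi Hdxi) as [x1 HS].
  exists x1. split; [exact (fs_x1_pos HS)|]. intros x0 Hx0.
  replace (IZR m / alpha) with (- (- IZR m) / alpha) by (field; lra).
  exact (length_difference_oscillates f xi dxi Psi a alpha (- IZR m) d x1 HS x0 Hx0).
Qed.
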